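(* Fix $i\in\{1,\dots,\bar m\}$. Suppose $(A,B,K,\bar b,\bar D_{[i]})$ with $\bar D_{[i]}\in\mathbb{D}_+^{\bar m}$ satisfies condition (PI$_i$). Consider the LMI in the variables $(\mathbf A,\mathbf B,\mathbf K,\bar{\mathbf b},\hat{\bar{\mathbf D}}_{[i]})$: $$\begin{bmatrix} \mathbf I & \mathbf 0 & -\mathbf B^\top\bar P_i^\top & \mathbf K\\ * & \hat{\bar{\mathbf D}}_{[i]} & \bar{\mathbf b} & \mathbf 0\\ * & * & 2\bar{\mathbf b}_i+\mathcal{L}^{B^\top\bar P_i^\top,\mathbf I}_{\mathbf B^\top\bar P_i^\top,\mathbf I} & \bar P_i\mathbf A\\ * & * & * & \mathcal{L}^{\bar P,\bar D_{[i]}^{-1}}_{\bar P,\hat{\bar{\mathbf D}}_{[i]}}+\mathcal{L}^{K,\mathbf I}_{\mathbf K,\mathbf I} \end{bmatrix}\succ0 .$$ Then (a) it is satisfied by $(A,B,K,\bar b,\bar D_{[i]}^{-1})$; and (b) any solution with $\hat{\bar{\mathbf D}}_{[i]}\in\mathbb{D}_+^{\bar m}$ is such that $(\mathbf A,\mathbf B,\mathbf K,\bar{\mathbf b},\hat{\bar{\mathbf D}}_{[i]}^{-1})$ satisfies condition (PI$_i$).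
   Context: Notation: $M_i$ is the $i$-th row of $M$, $b_i$ the $i$-th entry of $b$; $\mathbb{D}_+^m$ is the set of $m\times m$ diagonal matrices with positive diagonal; $\succ0$ means symmetric positive definite; $*$ denotes symmetric blocks; $\mathbf I,\mathbf 0$ identity/zero blocks of appropriate size (the first diagonal $\mathbf I$ is $n_u\times n_u$). For $\mathbf L,L\in\mathbb{R}^{m\times n}$ and symmetric invertible $\mathbf D,D\in\mathbb{R}^{m\times m}$, $\mathcal{L}^{L,D}_{\mathbf L,\mathbf D}:=\mathbf L^\top D^{-1}L+L^\top D^{-1}\mathbf L-L^\top D^{-1}\mathbf DD^{-1}L$. Fixed data: $\bar P\in\mathbb{R}^{\bar m\times n_x}$. Variables: $A\in\mathbb{R}^{n_x\times n_x}$, $B\in\mathbb{R}^{n_x\times n_u}$, $K\in\mathbb{R}^{n_u\times n_x}$, $\bar b\in\mathbb{R}^{\bar m}$ (bold versions same sizes). Condition (PI$_i$) for $(A,B,K,\bar b,\bar D_{[i]})$: $$\begin{bmatrix}2\bar b_i-\bar b^\top\bar D_{[i]}\bar b & \bar P_i(A+BK)\\ * & \bar P^\top\bar D_{[i]}\bar P\end{bmatrix}\succ0.$$ *)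

From mathcomp Require Import all_boot all_order all_algebra.
Set Implicit Arguments. Unset Strict Implicit. Unset Printing Implicit Defensive.
Import Order.TTheory GRing.Theory Num.Theory.
Local Open Scope ring_scope.

Definition posdef (R : realFieldType) (n : nat) (M : 'M[R]_n) : Prop :=
  M^T = M /\ forall x : 'cV[R]_n, x != 0 -> 0 < (x^T *m M *m x) 0 0.

Definition diag_pos (R : realFieldType) (m : nat) (D : 'M[R]_m) : Prop :=
  is_diag_mx D /\ forall j : 'I_m, 0 < D j j.

(* \mathcal{L}^{L,D}_{LL,DD} = LL^T D^{-1} L + L^T D^{-1} LL - L^T D^{-1} DD D^{-1} L *)
Definition calL (R : realFieldType) (m n : nat)
  (L : 'M[R]_(m, n)) (D : 'M[R]_m) (LL : 'M[R]_(m, n)) (DD : 'M[R]_m) : 'M[R]_n :=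
  LL^T *m invmx D *m L + L^T *m invmx D *m LL
  - L^T *m invmx D *m DD *m invmx D *m L.

Definition PI (R : realFieldType) (nx nu mb : nat) (Pb : 'M[R]_(mb, nx))
  (i : 'I_mb) (A : 'M[R]_nx) (B : 'M[R]_(nx, nu)) (K : 'M[R]_(nu, nx))
  (b : 'cV[R]_mb) (D : 'M[R]_mb) : Prop :=
  let M11 : 'M[R]_1 := (2 * b i 0)%:M - b^T *m D *m b in
  let M12 : 'M[R]_(1, nx) := row i Pb *m (A + B *m K) in
  let M22 : 'M[R]_nx := Pb^T *m D *m Pb in
  posdef (block_mx M11 M12 M12^T M22).

(* The LMI of the statement, at the current point (B,K,Dbar) and in the
   variables (AA,BB,KK,bb,DDh). Block sizes: nu, mb, 1, nx. *)
Definition LMI (R : realFieldType) (nx nu mb : nat) (Pb : 'M[R]_(mb, nx))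
  (i : 'I_mb) (B : 'M[R]_(nx, nu)) (K : 'M[R]_(nu, nx)) (Dbar : 'M[R]_mb)
  (AA : 'M[R]_nx) (BB : 'M[R]_(nx, nu)) (KK : 'M[R]_(nu, nx))
  (bb : 'cV[R]_mb) (DDh : 'M[R]_mb) : 'M[R]_(nu + (mb + (1 + nx))) :=
  let Pi : 'rV[R]_nx := row i Pb in
  let M12 : 'M[R]_(nu, mb) := 0 in
  let M13 : 'M[R]_(nu, 1) := - (BB^T *m Pi^T) in
  let M14 : 'M[R]_(nu, nx) := KK in
  let M22 : 'M[R]_mb := DDh in
  let M23 : 'M[R]_(mb, 1) := bb in
  let M24 : 'M[R]_(mb, nx) := 0 in
  let M33 : 'M[R]_1 := (2 * bb i 0)%:M
      + calL (B^T *m Pi^T) 1%:M (BB^T *m Pi^T) 1%:M in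
  let M34 : 'M[R]_(1, nx) := Pi *m AA in
  let M44 : 'M[R]_nx := calL Pb (invmx Dbar) Pb DDh + calL K 1%:M KK 1%:M in
  block_mx 1%:M (row_mx M12 (row_mx M13 M14))
           (col_mx M12^T (col_mx M13^T M14^T))
           (block_mx M22 (row_mx M23 M24) (col_mx M23^T M24^T)
                     (block_mx M33 M34 M34^T M44)).

(* Taking Schur complements with respect to the identity block and to the
   [DDh] block reduces the LMI to a [(1 + nx)]-matrix.  Completing the square
   in each of the three calL terms,
     calL L D LL DD = LL^T DD^-1 LL - G^T DD^-1 G  with  G = LL - DD D^-1 L,
   shows that this reduced matrix is the (PI_i) matrix for [invmx DDh] minus a
   positive semidefinite gap, and the gap vanishes at (A, B, K, b, Dbar^-1). *)
From mathcomp Require Import all_boot all_order all_algebra.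
From Corelib Require Import Setoid.
Set Implicit Arguments. Unset Strict Implicit. Unset Printing Implicit Defensive.
Import Order.TTheory GRing.Theory Num.Theory.
Local Open Scope ring_scope.

Section QuadraticForms.
Variable R : realFieldType.

Definition qform n (M : 'M[R]_n) (x : 'cV[R]_n) : R := (x^T *m M *m x) 0 0.

Definition psd n (M : 'M[R]_n) : Prop := M^T = M /\ forall x, 0 <= qform M x.

Lemma qform0 n (M : 'M[R]_n) : qform M 0 = 0.
Proof. by rewrite /qform mulmx0 mxE. Qed.

Lemma qformD n (M N : 'M[R]_n) x : qform (M + N) x = qform M x + qform N x.
Proof. by rewrite /qform mulmxDr mulmxDl mxE. Qed.

Lemma qform_conj m n (X : 'M[R]_(m, n)) (M : 'M[R]_m) x :
  qform (X^T *m M *m X) x = qform M (X *m x).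
Proof. by rewrite /qform trmx_mul !mulmxA. Qed.

Lemma qform_block p q (P : 'M[R]_p) (Q : 'M[R]_(p, q)) (Q' : 'M[R]_(q, p))
    (S : 'M[R]_q) z x :
  qform (block_mx P Q Q' S) (col_mx z x) =
  qform P z + (z^T *m Q *m x) 0 0 + (x^T *m Q' *m z) 0 0 + qform S x.
Proof.
rewrite /qform tr_col_mx mul_row_block mul_row_col !mulmxDl !mxE -!addrA.
by congr (_ + _); rewrite addrCA.
Qed.

Lemma posdef_qform_ge0 n (M : 'M[R]_n) x : posdef M -> 0 <= qform M x.
Proof.
move=> [_ pM]; have [->|nx0] := eqVneq x 0; first by rewrite qform0.
exact/ltW/pM.
Qed.

Lemma posdef_psd n (M : 'M[R]_n) : posdef M -> psd M.
Proof. by move=> pM; split=> [|x]; [exact: pM.1 | exact: posdef_qform_ge0]. Qed.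

Lemma psdD n (M N : 'M[R]_n) : psd M -> psd N -> psd (M + N).
Proof.
move=> [sM pM] [sN pN]; split=> [|x]; first by rewrite linearD /= sM sN.
by rewrite qformD addr_ge0.
Qed.

Lemma psd_conj m n (X : 'M[R]_(m, n)) (M : 'M[R]_m) : psd M -> psd (X^T *m M *m X).
Proof.
move=> [sM pM]; split=> [|x]; last by rewrite qform_conj.
by rewrite !trmx_mul trmxK sM mulmxA.
Qed.

Lemma psd_block_diag p q (P : 'M[R]_p) (S : 'M[R]_q) :
  psd P -> psd S -> psd (block_mx P 0 0 S).
Proof.
move=> [sP pP] [sS pS]; split=> [|x]; first by rewrite tr_block_mx sP sS !trmx0.
by rewrite -[x]vsubmxK qform_block !mulmx0 !mul0mx !mxE !addr0 addr_ge0.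
Qed.

Lemma posdefD_psd n (M N : 'M[R]_n) : posdef M -> psd N -> posdef (M + N).
Proof.
move=> [sM pM] [sN pN]; split=> [|x x0]; first by rewrite linearD /= sM sN.
change (0 < qform (M + N) x); by rewrite qformD ltr_pwDl // pM.
Qed.

Lemma posdef_unitmx n (M : 'M[R]_n) : posdef M -> M \in unitmx.
Proof.
move=> [sM pM]; rewrite -row_free_unit -kermx_eq0; apply/negPn/negP.
case/rowV0Pn=> v /sub_kermxP vM v0.
have := pM v^T; rewrite -trmx0 (inj_eq trmx_inj) => /(_ v0).
by rewrite trmxK vM mul0mx mxE ltxx.
Qed.

Lemma posdef_invmx n (M : 'M[R]_n) : posdef M -> posdef (invmx M).
Proof.
move=> pM; have uM := posdef_unitmx pM; have [sM qM] := pM.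
split=> [|x x0]; first by rewrite trmx_inv sM.
change (0 < qform (invmx M) x).
have -> : invmx M = (invmx M)^T *m M *m invmx M.
  by rewrite trmx_inv sM mulVmx // mul1mx.
rewrite qform_conj; apply: qM; apply: contra x0 => /eqP Mx0.
by rewrite -[x]mul1mx -(mulmxV uM) -mulmxA Mx0 mulmx0.
Qed.

Lemma diag_pos_posdef n (D : 'M[R]_n) : diag_pos D -> posdef D.
Proof.
move=> [/is_diag_mxP dD pD].
have qD x : qform D x = \sum_j D j j * x j 0 ^+ 2.
  rewrite /qform !mxE; apply: eq_bigr => k _.
  rewrite !mxE (bigD1 k) //= big1 ?addr0 => [|j jk]; last by rewrite dD ?mulr0.
  by rewrite mxE mulrAC -expr2 mulrC.
split=> [|x x0].
  apply/matrixP => j k; rewrite mxE.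
  by have [->|jk] := eqVneq j k; rewrite // !dD // eq_sym.
have [j xj] : exists j, x j 0 != 0.
  apply/existsP; apply: contraR x0 => /existsPn x0.
  by apply/eqP/matrixP => a b; rewrite ord1 mxE; apply/eqP/negPn.
change (0 < qform D x); rewrite qD (bigD1 j) //= ltr_pwDl //.
  by rewrite mulr_gt0 // exprn_even_gt0 //= xj orbT.
by apply: sumr_ge0 => k _; rewrite mulr_ge0 ?sqr_ge0 // ltW.
Qed.

Lemma posdef1 n : posdef (1%:M : 'M[R]_n).
Proof.
apply: diag_pos_posdef; split=> [|j]; first exact: scalar_mx_is_diag.
by rewrite mxE eqxx.
Qed.

Lemma psd_gram m n (X : 'M[R]_(m, n)) : psd (X^T *m X).
Proof. by rewrite -[X^T]mulmx1; apply/psd_conj/posdef_psd/posdef1. Qed.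
End QuadraticForms.

Section Schur.
Variables (R : realFieldType) (p q : nat).
Variables (P : 'M[R]_p) (Q : 'M[R]_(p, q)) (S : 'M[R]_q).
Hypothesis pP : posdef P.

Let sP : P^T = P. Proof. exact: pP.1. Qed.
Let uP : P \in unitmx. Proof. exact: posdef_unitmx. Qed.

Lemma qform_schur z x :
  qform (block_mx P Q Q^T S) (col_mx z x) =
  qform P (z + invmx P *m (Q *m x)) + qform (S - Q^T *m invmx P *m Q) x.
Proof.
rewrite /qform; set w := z + _; set Sc := S - _.
suff -> : (col_mx z x)^T *m block_mx P Q Q^T S *m col_mx z x =
          w^T *m P *m w + x^T *m Sc *m x by rewrite mxE.
rewrite tr_col_mx mul_row_block mul_row_col !mulmxDl.
set u := Q *m x.
have -> : z^T *m Q *m x = z^T *m u by rewrite mulmxA.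
have -> : x^T *m Q^T *m z = u^T *m z by rewrite trmx_mul.
have -> : x^T *m Sc *m x = x^T *m S *m x - u^T *m invmx P *m u.
  by rewrite mulmxBr mulmxBl !mulmxA -trmx_mul -!mulmxA.
rewrite /w -/u [(_ + _)^T]linearD /= [(invmx P *m u)^T]trmx_mul trmx_inv sP.
rewrite !mulmxDl !mulmxDr -!mulmxA !(mulmxA P) mulmxV // !mul1mx.
rewrite (mulmxA (invmx P)) mulVmx // mul1mx.
by rewrite addrACA -!addrA [u^T *m (invmx P *m u) + _]addrCA subrr addr0.
Qed.

Lemma posdef_block_schur :
  posdef (block_mx P Q Q^T S) <-> posdef (S - Q^T *m invmx P *m Q).
Proof.
have sX : (Q^T *m invmx P *m Q)^T = Q^T *m invmx P *m Q.
  by rewrite !trmx_mul trmxK trmx_inv sP mulmxA.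
have symM : (block_mx P Q Q^T S)^T = block_mx P Q Q^T S <-> S^T = S.
  by rewrite tr_block_mx sP trmxK; split=> [/eq_block_mx[] //|->].
have symS : (S - Q^T *m invmx P *m Q)^T = S - Q^T *m invmx P *m Q <-> S^T = S.
  by rewrite linearB /= sX; split=> [/addIr|->].
split=> -[sM pos]; split; first by apply/symS/symM.
- move=> x x0; have := pos (col_mx (- (invmx P *m (Q *m x))) x).
  rewrite col_mx_eq0 negb_and x0 orbT => /(_ isT).
  by rewrite -[X in 0 < X]/(qform _ _) qform_schur addNr qform0 add0r.
- by apply/symM/symS.
- move=> w w0; change (0 < qform (block_mx P Q Q^T S) w).
  move: w0; rewrite -[w]vsubmxK col_mx_eq0 qform_schur.
  move: (usubmx w) (dsubmx w) => z x.
  have [-> /= z0|x0 _] := eqVneq x 0.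
    by rewrite qform0 !mulmx0 !addr0 andbT in z0 *; apply: pP.2.
  by rewrite ltr_wpDl ?posdef_qform_ge0 //; apply: pos.
Qed.
End Schur.

Section CompleteSquare.
Variables (R : realFieldType) (m n : nat).
Implicit Types (L LL : 'M[R]_(m, n)) (D DD : 'M[R]_m).

Lemma calL_complete_square L D LL DD :
  D^T = D -> DD^T = DD -> DD \in unitmx ->
  calL L D LL DD = LL^T *m invmx DD *m LL
    - (LL - DD *m invmx D *m L)^T *m invmx DD *m (LL - DD *m invmx D *m L).
Proof.
move=> sD sDD uDD; rewrite [(LL - _)^T]linearB /= !trmx_mul trmx_inv sD sDD.
rewrite !mulmxBl !mulmxBr opprB /calL -!mulmxA.
rewrite !(mulmxA DD (invmx DD)) mulmxV // !mul1mx (mulmxA (invmx DD) DD) mulVmx //.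
rewrite mul1mx opprB addrCA [LL^T *m (invmx DD *m LL) + _]addrC subrK.
by rewrite [RHS]addrC addrA.
Qed.

Lemma calL_id_complete_square L LL :
  calL L 1%:M LL 1%:M = LL^T *m LL - (LL - L)^T *m (LL - L).
Proof.
by rewrite calL_complete_square ?trmx1 ?unitmx1 // invmx1 !mulmx1 mul1mx.
Qed.
End CompleteSquare.

Section LMI.
Variables (R : realFieldType) (nx nu mb : nat) (Pb : 'M[R]_(mb, nx)) (i : 'I_mb).
Variables (B : 'M[R]_(nx, nu)) (K : 'M[R]_(nu, nx)) (Dbar : 'M[R]_mb).
Hypothesis pDbar : posdef Dbar.

Local Notation Pi := (row i Pb).

Definition PI_mx (AA : 'M[R]_nx) (BB : 'M[R]_(nx, nu)) (KK : 'M[R]_(nu, nx))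
    (bb : 'cV[R]_mb) (D : 'M[R]_mb) : 'M[R]_(1 + nx) :=
  block_mx ((2 * bb i 0)%:M - bb^T *m D *m bb) (Pi *m (AA + BB *m KK))
           (Pi *m (AA + BB *m KK))^T (Pb^T *m D *m Pb).

(* The Schur complement of the LMI matrix with respect to its leading block
   [block_mx 1%:M 0 0 DDh], taken in two steps. *)
Definition LMI_schur (AA : 'M[R]_nx) (BB : 'M[R]_(nx, nu)) (KK : 'M[R]_(nu, nx))
    (bb : 'cV[R]_mb) (DDh : 'M[R]_mb) : 'M[R]_(1 + nx) :=
  let N := row_mx (- (BB^T *m Pi^T)) KK in
  let Q := row_mx bb (0 : 'M[R]_(mb, nx)) in
  block_mx ((2 * bb i 0)%:M + calL (B^T *m Pi^T) 1%:M (BB^T *m Pi^T) 1%:M)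
           (Pi *m AA) (Pi *m AA)^T
           (calL Pb (invmx Dbar) Pb DDh + calL K 1%:M KK 1%:M)
  - N^T *m N - Q^T *m invmx DDh *m Q.

Lemma posdef_LMI AA BB KK bb DDh : posdef DDh ->
  posdef (LMI Pb i B K Dbar AA BB KK bb DDh) <-> posdef (LMI_schur AA BB KK bb DDh).
Proof.
move=> pDDh; rewrite /LMI /LMI_schur /= -!tr_row_mx posdef_block_schur; last exact: posdef1.
rewrite invmx1 mulmx1 [(row_mx 0 _)^T]tr_row_mx mul_col_row trmx0 !mul0mx mulmx0.
by rewrite opp_block_mx add_block_mx !subr0; apply: posdef_block_schur.
Qed.

Definition PI_gap (BB : 'M[R]_(nx, nu)) (KK : 'M[R]_(nu, nx)) (DDh : 'M[R]_mb) :
    'M[R]_(1 + nx) :=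
  let E := BB^T *m Pi^T - B^T *m Pi^T in
  let W := Pb - DDh *m Dbar *m Pb in
  block_mx (E^T *m E) 0 0 (W^T *m invmx DDh *m W + (KK - K)^T *m (KK - K)).

Lemma PI_mx_invmx AA BB KK bb DDh : posdef DDh ->
  PI_mx AA BB KK bb (invmx DDh) = LMI_schur AA BB KK bb DDh + PI_gap BB KK DDh.
Proof.
move=> pDDh; have [sDDh uDDh] := (pDDh.1, posdef_unitmx pDDh).
have sDbar : (invmx Dbar)^T = invmx Dbar by rewrite trmx_inv pDbar.1.
rewrite /LMI_schur /PI_gap /= !calL_id_complete_square.
rewrite [calL Pb _ _ _]calL_complete_square // invmxK.
rewrite !tr_row_mx mul_col_row mul_col_mx mul_col_row trmx0 !mul0mx !mulmx0.
rewrite !opp_block_mx !add_block_mx.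
have trC : (BB^T *m Pi^T)^T = Pi *m BB by rewrite trmx_mul !trmxK.
have trNC : (- (BB^T *m Pi^T))^T = - (Pi *m BB) by rewrite linearN /= trC.
have PiAB : Pi *m (AA + BB *m KK) = Pi *m AA - (- (BB^T *m Pi^T))^T *m KK.
  by rewrite trNC mulNmx opprK mulmxDr mulmxA.
congr block_mx.
- rewrite trNC mulNmx mulmxN opprK trC.
  set a := (2 * bb i 0)%:M; set X := Pi *m BB *m _; set G := _ *m (_ - _).
  by rewrite addrA [_ - G - X]addrAC addrK [a - G - _]addrAC subrK.
- by rewrite subr0 addr0.
- by rewrite PiAB subr0 addr0 [(_ - _)^T]linearB /= [(_ *m KK)^T]trmx_mul trmxK.
- set P := Pb^T *m invmx DDh *m Pb; set W := _ *m (Pb - _); set G := (KK - K)^T *m _.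
  rewrite subr0 [P - W + _]addrA [_ - G - _]addrAC addrK.
  by rewrite -[P - W - G]addrA -opprD subrK.
Qed.

Lemma PI_gap_psd BB KK DDh : posdef DDh -> psd (PI_gap BB KK DDh).
Proof.
move=> pDDh; apply: psd_block_diag; first exact: psd_gram.
by apply: psdD; [apply/psd_conj/posdef_psd/posdef_invmx | exact: psd_gram].
Qed.

Lemma PI_gap0 : PI_gap B K (invmx Dbar) = 0.
Proof.
rewrite /PI_gap !subrr mulVmx ?posdef_unitmx // mul1mx subrr.
by rewrite !mulmx0 ?mul0mx addr0 block_mx0.
Qed.
End LMI.

Theorem theorem3 (R : realFieldType) (nx nu mb : nat) (Pb : 'M[R]_(mb, nx))
  (i : 'I_mb) (A : 'M[R]_nx) (B : 'M[R]_(nx, nu)) (K : 'M[R]_(nu, nx))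
  (b : 'cV[R]_mb) (Dbar : 'M[R]_mb) :
  diag_pos Dbar ->
  PI Pb i A B K b Dbar ->
  posdef (LMI Pb i B K Dbar A B K b (invmx Dbar)) /\
  (forall (AA : 'M[R]_nx) (BB : 'M[R]_(nx, nu)) (KK : 'M[R]_(nu, nx))
          (bb : 'cV[R]_mb) (DDh : 'M[R]_mb),
      diag_pos DDh ->
      posdef (LMI Pb i B K Dbar AA BB KK bb DDh) ->
      PI Pb i AA BB KK bb (invmx DDh)).
Proof.
move=> /diag_pos_posdef pDbar hPI; have pDbarV := posdef_invmx pDbar.
split=> [|AA BB KK bb DDh /diag_pos_posdef pDDh].
- apply/posdef_LMI => //.
  have := PI_mx_invmx Pb i B K pDbar A B K b pDbarV.
  by rewrite invmxK PI_gap0 // addr0 => <-; exact: hPI.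
- move/(posdef_LMI Pb i B K Dbar AA BB KK bb pDDh) => hschur.
  change (posdef (PI_mx Pb i AA BB KK bb (invmx DDh))).
  rewrite (PI_mx_invmx Pb i B K pDbar AA BB KK bb pDDh).
  exact: posdefD_psd hschur (PI_gap_psd Pb i B K Dbar BB KK pDDh).
Qed.
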